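(* Let $(X,d_X)$ be a complete metric space and let $\{E_t\}_{t\in\mathbb{R}}$ be a locally uniformly compact family of nonempty compact subsets of $X$. Then there exists a nonempty compact set $E\subset X$ with $\lim_{t\to\infty}\operatorname{dist}(E_t,E)=0$ if and only if $\{E_t\}_{t\in\mathbb{R}}$ is forward compact, i.e. there is a compact set $K\subset X$ with $\bigcup_{t\geq0}E_t\subset K$.
   Context: A family $\{E_t\}_{t\in\mathbb{R}}$ of nonempty compact sets is locally uniformly compact if for every bounded interval $I\subset\mathbb{R}$ the union $\bigcup_{t\in I}E_t$ is precompact. $\operatorname{dist}(A,B)=\sup_{a\in A}\inf_{b\in B}d_X(a,b)$ is the Hausdorff semi-metric. *)

From HB Require Import structures.
From mathcomp Require Import all_boot all_order all_algebra.
From mathcomp Require Import all_classical all_reals all_analysis.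
Set Implicit Arguments. Unset Strict Implicit. Unset Printing Implicit Defensive.
Import Order.TTheory GRing.Theory Num.Theory.
Local Open Scope classical_set_scope.
Local Open Scope ring_scope.

Definition complete_space {R : realType} (X : metricType R) : Prop :=
  forall F : set_system X, ProperFilter F -> cauchy F -> exists x : X, F --> x.

Definition hsemidist {R : realType} {X : metricType R} (A B : set X) : R :=
  sup [set inf [set mdist a b | b in B] | a in A].

(* Locally uniformly compact family: for every bounded interval I,
   the union of E t over t in I is precompact (it suffices to consider
   closed bounded intervals [a,b], which contain every bounded interval). *)
Definition locally_uniformly_compact {R : realType} {X : metricType R}
    (E : R -> set X) : Prop :=
  forall a b : R, precompact (\bigcup_(t in `[a, b]) E t).

Definition forward_compact {R : realType} {X : metricType R}
    (E : R -> set X) : Prop :=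
  exists K : set X, compact K /\ \bigcup_(t in `[0, +oo[) E t `<=` K.

From HB Require Import structures.
From mathcomp Require Import all_boot all_order all_algebra.
From mathcomp Require Import all_classical all_reals all_analysis.
From mathcomp Require Import lra.
Import Order.TTheory GRing.Theory Num.Theory.
Import numFieldNormedType.Exports.
Local Open Scope classical_set_scope.
Local Open Scope ring_scope.
Set Implicit Arguments. Unset Strict Implicit.

(* If dist(E_t, E) -> 0 with E compact, then for every e > 0 and T large the
   forward orbit lies within e of the compact set closure(U_{0<=t<=T} E_t) u E;
   in a complete space a closed set approximable to every precision by compact
   sets is compact.  Conversely, if the forward orbit lies in a compact K, the
   omega-limit set (the intersection over s of closure(U_{t>=s} E_t)) is
   nonempty, compact, and attracts E_t: points of E_t staying e away from it
   would cluster in K at a point of the omega-limit set itself. *)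

Section nested_compact.
Context {R : realType} {T : topologicalType}.

Lemma compact_nested_cluster (C : set T) (A : R -> set T) :
  compact C -> (forall s, A s `<=` C) ->
  (forall s s', s <= s' -> A s' `<=` A s) -> (forall s, A s !=set0) ->
  exists2 p, C p & forall s, closure (A s) p.
Proof.
move=> cC AC Adecr An0.
have FA : Filter (filter_from setT A).
  apply: filter_fromT_filter; first by exists 0.
  move=> i j; exists (Num.max i j) => x Ax; split.
    by apply: (Adecr i (Num.max i j)) => //; rewrite le_max lexx.
  by apply: (Adecr j (Num.max i j)) => //; rewrite le_max lexx orbT.
have PA : ProperFilter (filter_from setT A).
  by apply: filter_from_proper => i _; exact: An0.
have [|p [Cp clp]] := cC _ PA; first by exists 0.
by exists p => // s B nB; apply: clp => //; exists s.
Qed.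

End nested_compact.

Section hausdorff_semidistance.
Context {R : realType} {X : metricType R}.
Implicit Types (A B : set X) (a b p : X).

Lemma closure_mdist_lt A p e : closure A p -> 0 < e ->
  exists2 a, A a & mdist p a < e.
Proof.
move=> clAp e0; have [a [Aa pa]] := clAp _ (nbhsx_ballx p e e0).
by exists a => //; move: pa; rewrite ballEmdist.
Qed.

Lemma compact_mdist_bounded A b : compact A ->
  exists M, forall a, A a -> mdist a b <= M.
Proof.
move=> cA; apply: contrapT => /forallNP unbounded.
pose far s := [set a | A a /\ s <= mdist a b].
have far_n0 s : far s !=set0.
  have /existsNP[a /not_implyP[Aa /negP]] := unbounded s.
  by rewrite -ltNge => /ltW; exists a.
have [p _ clp] := compact_nested_cluster cA (fun s a (h : far s a) => h.1)
  (fun s s' ss' a h => conj h.1 (le_trans ss' h.2)) far_n0.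
have [a [_ far_a] pa] := closure_mdist_lt (clp (mdist p b + 1)) ltr01.
by have := metric_triangle a p b; rewrite metric_sym in pa; lra.
Qed.

Definition infdist a B : R := inf [set mdist a b | b in B].

Lemma infdist_ge0 a B : B !=set0 -> 0 <= infdist a B.
Proof.
move=> [b Bb]; apply: lb_le_inf; first by exists (mdist a b), b.
by move=> _ [b' _ <-]; exact: mdist_ge0.
Qed.

Lemma infdist_le a B b : B b -> infdist a B <= mdist a b.
Proof.
move=> Bb; apply: ge_inf; last by exists b.
by exists 0 => _ [b' _ <-]; exact: mdist_ge0.
Qed.

Lemma infdist_lt a B e : B !=set0 -> infdist a B < e ->
  exists2 b, B b & mdist a b < e.
Proof.
move=> [b0 Bb0] /inf_lt [|_ [b Bb <-] ab]; first by exists (mdist a b0), b0.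
by exists b.
Qed.

Lemma infdist_le_hsemidist A B a : compact A -> B !=set0 -> A a ->
  infdist a B <= hsemidist A B.
Proof.
move=> cA [b0 Bb0] Aa; apply: ub_le_sup; last by exists a.
have [M AM] := compact_mdist_bounded b0 cA.
by exists M => _ [a' Aa' <-]; exact: le_trans (infdist_le _ Bb0) (AM a' Aa').
Qed.

Lemma hsemidist_ge0 A B : compact A -> A !=set0 -> B !=set0 ->
  0 <= hsemidist A B.
Proof.
move=> cA [a Aa] B0.
exact: le_trans (infdist_ge0 a B0) (infdist_le_hsemidist cA B0 Aa).
Qed.

Lemma hsemidist_le A B e : A !=set0 ->
  (forall a, A a -> exists2 b, B b & mdist a b < e) -> hsemidist A B <= e.
Proof.
move=> [a0 Aa0] near_B; apply: ge_sup; first by exists (infdist a0 B), a0.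
move=> _ [a Aa <-]; have [b Bb ab] := near_B a Aa.
exact/ltW/(le_lt_trans (infdist_le a Bb)).
Qed.

Definition attracts (E0 : set X) (E : R -> set X) :=
  forall e, 0 < e -> exists M, forall t, M < t ->
    forall a, E t a -> exists2 b, E0 b & mdist a b < e.

Lemma hsemidist_cvg0P (E : R -> set X) (E0 : set X) :
  (forall t, compact (E t) /\ E t !=set0) -> E0 !=set0 ->
  hsemidist (E t) E0 @[t --> +oo] --> 0 <-> attracts E0 E.
Proof.
move=> cE E0n0; split => [cvg0 e e0|attr].
  have /cvgrPdist_lt/(_ e e0) [M [_ HM]] := cvg0.
  exists M => t Mt a Eta; apply: infdist_lt => //.
  apply: le_lt_trans (infdist_le_hsemidist (cE t).1 E0n0 Eta) _.
  by move: (HM t Mt); rewrite sub0r normrN; exact: le_lt_trans (ler_norm _).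
apply/cvgrPdist_le => e e0; have [M HM] := attr e e0.
exists M; split; first exact: num_real.
move=> t Mt; rewrite sub0r normrN ger0_norm.
  exact: hsemidist_le (cE t).2 (HM t Mt).
exact: hsemidist_ge0 (cE t).1 (cE t).2 E0n0.
Qed.

End hausdorff_semidistance.

Section compactly_approximable.
Context {R : realType} {X : metricType R}.

Definition compactly_approximable (K : set X) :=
  forall e, 0 < e -> exists2 C, compact C &
    forall y, K y -> exists2 c, C c & mdist y c < e.

Lemma compactly_approximable_closure (U : set X) :
  compactly_approximable U -> compactly_approximable (closure U).
Proof.
move=> apxU e e0; have e20 : 0 < e / 2 by rewrite divr_gt0.
have [C cC CU] := apxU _ e20; exists C => // y clUy.
have [u Uu yu] := closure_mdist_lt clUy e20.
have [c Cc uc] := CU u Uu; exists c => //.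
by have := metric_triangle y u c; lra.
Qed.

(* Choosing an e-close point of a compact C for every point of K pushes an
   ultrafilter on K to a filter on C, whose cluster point is the centre of a
   2e-ball in the ultrafilter: ultrafilters on K are Cauchy. *)
Lemma complete_compactly_approximable_compact (K : set X) :
  complete_space X -> closed K -> compactly_approximable K -> compact K.
Proof.
move=> cplX clK apxK; rewrite compact_ultra => G UG GK.
suff /cplX[x Gx] : cauchy G by exists x; split => //; exact: closed_cvg Gx.
apply: cauchy_exP => eps eps0; have e0 : 0 < eps / 2 by rewrite divr_gt0.
have [C cC CK] := apxK _ e0.
have [c Hc] : {c : X -> X & forall y, K y -> C (c y) /\ mdist y (c y) < eps / 2}.
  apply: (@choice _ _ (fun y c => K y -> C c /\ mdist y c < eps / 2)) => y.
  have [/CK[c Cc yc]|nKy] := pselect (K y); first by exists c.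
  by exists y.
have cGC : G (c @^-1` C) by apply: filterS GK => y /Hc[].
have [p [_ clp]] := cC (c @ G) _ cGC.
exists p; have [Gnear|Gfar] := in_ultra_setVsetC (c @^-1` ball p (eps / 2)) UG.
  apply: filterS (filterI Gnear GK) => y [/= pcy /Hc[_ ycy]].
  move: pcy; rewrite !ballEmdist /= => pcy.
  by have := metric_triangle p (c y) y; rewrite (metric_sym (c y) y); lra.
by have [z []] := clp (~` ball p (eps / 2)) _ Gfar (nbhsx_ballx p _ e0).
Qed.

End compactly_approximable.

Section forward_orbit.
Context {R : realType} {X : metricType R} (E : R -> set X).

Definition orbit_from (s : R) : set X := \bigcup_(t in `[s, +oo[) E t.

Definition omega_limit : set X := [set p | forall s, closure (orbit_from s) p].

Lemma orbit_fromS s s' : s <= s' -> orbit_from s' `<=` orbit_from s.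
Proof.
move=> ss' x [t]; rewrite /= !in_itv /= !andbT => s't Etx.
by exists t; rewrite //= in_itv /= (le_trans ss' s't).
Qed.

Lemma orbit_from_self s t : s <= t -> E t `<=` orbit_from s.
Proof. by move=> st x Etx; exists t; rewrite //= in_itv /= st. Qed.

Lemma closed_omega_limit : closed omega_limit.
Proof.
move=> p clp s; apply: closed_closure.
by apply: closureS clp => q; apply.
Qed.

Lemma attracts_compactly_approximable (E0 : set X) :
  locally_uniformly_compact E -> compact E0 -> attracts E0 E ->
  compactly_approximable (orbit_from 0).
Proof.
move=> luc cE0 attr e e0; have [M HM] := attr e e0.
exists (closure (\bigcup_(t in `[0, M]) E t) `|` E0).
  by apply: compactU => //; rewrite -precompactE; exact: luc.
move=> y [t]; rewrite /= in_itv /= andbT => t0 Ety.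
have [tM|Mt] := leP t M; last first.
  by have [b E0b yb] := HM t Mt y Ety; exists b => //; right.
exists y; last by rewrite mdistxx.
by left; apply: subset_closure; exists t; rewrite //= in_itv /= t0 tM.
Qed.

Variable K : set X.
Hypotheses (cK : compact K) (orbitK : orbit_from 0 `<=` K).

Lemma omega_limit_sub : omega_limit `<=` K.
Proof.
move=> p /(_ 0) cl0p.
by apply: compact_closed (@metric_hausdorff _ X) cK _ _; apply: closureS cl0p.
Qed.

Lemma compact_omega_limit : compact omega_limit.
Proof. exact: subclosed_compact closed_omega_limit cK omega_limit_sub. Qed.

Lemma omega_limit_closure_meet (W : set X) :
  (forall s, orbit_from s `&` W !=set0) ->
  exists2 p, omega_limit p & closure W p.
Proof.
move=> meetW; pose A s := orbit_from (Num.max s 0) `&` W.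
have [s x [ox _]|||p _ clp] := @compact_nested_cluster R X K A cK.
- by apply: orbitK; apply: orbit_fromS ox; rewrite le_max lexx orbT.
- move=> s s' ss' x [ox Wx]; split => //; apply: orbit_fromS ox.
  by rewrite ge_max !le_max ss' lexx orbT andbT.
- by move=> s; exact: meetW.
exists p; last by apply: closureS (clp 0) => x [].
move=> s; apply: closureS (clp s) => x [ox _]; apply: orbit_fromS ox.
by rewrite le_max lexx.
Qed.

Lemma omega_limit_neq0 : (forall t, E t !=set0) -> omega_limit !=set0.
Proof.
move=> En0; have [|p wp _] := omega_limit_closure_meet (W := setT).
  move=> s; have [x Esx] := En0 s.
  by exists x; split=> //; exact: orbit_from_self Esx.
by exists p.
Qed.

Lemma omega_limit_attracts : attracts omega_limit E.
Proof.
move=> e e0; apply: contrapT => /forallNP not_attr.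
pose W := [set a | forall b, omega_limit b -> e <= mdist a b].
have [|p wp clWp] := omega_limit_closure_meet (W := W).
  move=> s; have /existsNP[t /not_implyP[st]] := not_attr s.
  move=> /existsNP[a /not_implyP[Eta far]].
  exists a; split; first exact: orbit_from_self (ltW st) _ Eta.
  by move=> b wb; rewrite leNgt; apply/negP => ab; apply: far; exists b.
have [a Wa pa] := closure_mdist_lt clWp e0.
by have := Wa p wp; rewrite metric_sym; lra.
Qed.

End forward_orbit.

Theorem proposition3p2 (R : realType) (X : metricType R) (E : R -> set X) :
  complete_space X ->
  (forall t, compact (E t) /\ E t !=set0) ->
  locally_uniformly_compact E ->
  ((exists E0 : set X, [/\ compact E0, E0 !=set0 &
      hsemidist (E t) E0 @[t --> +oo] --> (0 : R)])
   <-> forward_compact E).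
Proof.
move=> cplX cE luc; split.
- move=> [E0 [cE0 E0n0 /(hsemidist_cvg0P cE E0n0) attr]].
  exists (closure (orbit_from E 0)); split; last exact: subset_closure.
  apply: complete_compactly_approximable_compact cplX (@closed_closure _ _) _.
  apply: compactly_approximable_closure.
  exact: attracts_compactly_approximable luc cE0 attr.
- move=> [K [cK orbitK]].
  have wn0 := omega_limit_neq0 cK orbitK (fun t => (cE t).2).
  exists (omega_limit E); split => //; first exact: compact_omega_limit cK orbitK.
  exact/(hsemidist_cvg0P cE wn0)/(omega_limit_attracts cK orbitK).
Qed.
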